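(* The set $V=\{(y,x)\in M:\max_{1\le i\le d}e^{-\lambda_iy/2}|x_i|\le1\}$ is geodesically convex in $(M,g)$.
   Context: Let $d\ge1$, $0<\lambda_1\le\cdots\le\lambda_d$, and $M$ be $\mathbb{R}^{d+1}$ with coordinates $(y,x)=(y,x_1,\dots,x_d)$ and the Riemannian metric $g=dy^2+\sum_{i=1}^d e^{-2\lambda_i y}dx_i^2$. *)

From Stdlib Require Import Reals.
From Coquelicot Require Import Coquelicot.
Open Scope R_scope.

(* Points of M = R^{d+1} are pairs (y, x) with x : nat -> R; only the
   coordinates x 0, ..., x (d-1) are meaningful (0-based indexing of
   x_1..x_d).  lam i (i < d) stands for lambda_{i+1}. *)

Fixpoint sumR (n : nat) (f : nat -> R) : R :=
  match n with
  | O => 0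
  | S k => sumR k f + f k
  end.

Definition inV (d : nat) (lam : nat -> R) (y : R) (x : nat -> R) : Prop :=
  forall i : nat, (i < d)%nat -> exp (- (lam i) * y / 2) * Rabs (x i) <= 1.

(* A geodesic of g = dy^2 + sum_i e^{-2 lam_i y} dx_i^2 parametrised on [a,b]:
   a C^2 curve t |-> (y t, x_i t) satisfying the geodesic equations
     y''   = - sum_i lam_i e^{-2 lam_i y} (x_i')^2
     x_i'' = 2 lam_i y' x_i'
   (Christoffel symbols of g: Gamma^y_{ii} = lam_i e^{-2 lam_i y},
    Gamma^i_{iy} = Gamma^i_{yi} = - lam_i, all others zero). *)
Definition is_geodesic (d : nat) (lam : nat -> R) (a b : R)
    (y : R -> R) (x : nat -> R -> R) : Prop :=
  exists (y1 y2 : R -> R) (x1 x2 : nat -> R -> R),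
    forall t : R, a <= t <= b ->
      is_derive y t (y1 t) /\ is_derive y1 t (y2 t) /\
      (forall i : nat, (i < d)%nat ->
         is_derive (x i) t (x1 i t) /\ is_derive (x1 i) t (x2 i t) /\
         x2 i t = 2 * lam i * y1 t * x1 i t) /\
      y2 t = - sumR d (fun i => lam i * exp (-2 * lam i * y t) * (x1 i t) ^ 2).

Definition geodesically_convex (d : nat) (lam : nat -> R)
    (S : R -> (nat -> R) -> Prop) : Prop :=
  forall (a b : R) (y : R -> R) (x : nat -> R -> R),
    a <= b -> is_geodesic d lam a b y x ->
    S (y a) (fun i => x i a) -> S (y b) (fun i => x i b) ->
    forall t : R, a <= t <= b -> S (y t) (fun i => x i t).

(* For every coordinate i and sign s, the function
     h(t) = s x_i(t) - exp(lam_i y(t) / 2)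
   along a geodesic is quasi-convex: the geodesic equations give
     (h' e^{-2 lam_i y})' = e^{-3 lam_i y / 2} (3/4 lam_i^2 (y')^2 - lam_i y''/2) >= 0,
   because y'' <= 0.  Hence h' changes sign at most once, from - to +, so h
   cannot exceed its endpoint values, which are <= 0 when both ends lie in V. *)
From Stdlib Require Import Reals Lra Lia.
From Coquelicot Require Import Coquelicot.
Open Scope R_scope.

Lemma MVT_segment (f df : R -> R) (u v : R) :
  u <= v -> (forall s, u <= s <= v -> is_derive f s (df s)) ->
  exists c, u <= c <= v /\ f v - f u = df c * (v - u).
Proof.
intros Huv Hf.
destruct (MVT_gen f u v df) as [c [Hc Ec]].
- intros s Hs. apply Hf.
  rewrite Rmin_left, Rmax_right in Hs by lra. lra.
- intros s Hs. rewrite Rmin_left, Rmax_right in Hs by lra.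
  apply derivable_continuous_pt, ex_derive_Reals_0.
  exists (df s). apply Hf. lra.
- rewrite Rmin_left, Rmax_right in Hc by lra. now exists c.
Qed.

Lemma is_derive_nonneg_incr (f df : R -> R) (a b : R) :
  (forall s, a <= s <= b -> is_derive f s (df s)) ->
  (forall s, a <= s <= b -> 0 <= df s) ->
  forall u v, a <= u -> u <= v -> v <= b -> f u <= f v.
Proof.
intros Hf Hdf u v Hu Huv Hv.
destruct (MVT_segment f df u v Huv) as [c [Hc Ec]].
- intros s Hs. apply Hf. lra.
- assert (0 <= df c * (v - u)) by (apply Rmult_le_pos; [apply Hdf|]; lra).
  lra.
Qed.

Lemma bound_of_weighted_derive_nondecr (a b M : R) (g dg w : R -> R) :
  (forall t, a <= t <= b -> is_derive g t (dg t)) ->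
  (forall t, a <= t <= b -> 0 < w t) ->
  (forall u v, a <= u -> u <= v -> v <= b -> dg u * w u <= dg v * w v) ->
  g a <= M -> g b <= M -> forall t, a <= t <= b -> g t <= M.
Proof.
intros Hg Hw Hincr Ha Hb t Ht.
destruct (Rle_lt_dec (g t) M) as [|Hgt]; [assumption | exfalso].
assert (Hat : a < t) by (destruct (Req_dec a t) as [<-|]; lra).
assert (Htb : t < b) by (destruct (Req_dec t b) as [->|]; lra).
destruct (MVT_segment g dg a t) as [c1 [Hc1 E1]]; [lra | intros; apply Hg; lra |].
destruct (MVT_segment g dg t b) as [c2 [Hc2 E2]]; [lra | intros; apply Hg; lra |].
assert (Hrise : 0 < dg c1).
{ destruct (Rle_lt_dec (dg c1) 0); [exfalso | assumption].
  assert (dg c1 * (t - a) <= 0) by (apply Rmult_le_0_r; lra). lra. }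
assert (Hfall : dg c2 < 0).
{ destruct (Rle_lt_dec 0 (dg c2)); [exfalso | assumption].
  assert (0 <= dg c2 * (b - t)) by (apply Rmult_le_pos; lra). lra. }
assert (0 < w c1) by (apply Hw; lra).
assert (0 < w c2) by (apply Hw; lra).
assert (dg c1 * w c1 <= dg c2 * w c2) by (apply Hincr; lra).
nra.
Qed.

Lemma is_derive_exp_scal (c : R) (y : R -> R) (y' t : R) :
  is_derive y t y' -> is_derive (fun u => exp (c * y u)) t (c * y' * exp (c * y t)).
Proof.
intros Hy.
exact (is_derive_comp exp (fun u => c * y u) t _ _
         (is_derive_exp (c * y t)) (is_derive_scal y t c y' Hy)).
Qed.

Lemma is_derive_mult_R (f g : R -> R) (f' g' t : R) :
  is_derive f t f' -> is_derive g t g' ->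
  is_derive (fun u => f u * g u) t (f' * g t + f t * g').
Proof. intros Hf Hg. apply (is_derive_mult f g t f' g' Hf Hg). intros; apply Rmult_comm. Qed.

Lemma is_derive_minus_R (f g : R -> R) (f' g' t : R) :
  is_derive f t f' -> is_derive g t g' ->
  is_derive (fun u => f u - g u) t (f' - g').
Proof. exact (is_derive_minus f g t f' g'). Qed.

Lemma sumR_nonneg (n : nat) (f : nat -> R) :
  (forall j, (j < n)%nat -> 0 <= f j) -> 0 <= sumR n f.
Proof.
induction n as [|n IH]; intros Hf; simpl; [lra|].
assert (0 <= f n) by (apply Hf; lia).
assert (0 <= sumR n f) by (apply IH; intros; apply Hf; lia).
lra.
Qed.

Lemma exp_abs_le1_iff (m yv xv : R) :
  exp (- m * yv / 2) * Rabs xv <= 1 <-> Rabs xv <= exp (m / 2 * yv).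
Proof.
assert (Hinv : exp (- m * yv / 2) * exp (m / 2 * yv) = 1).
{ rewrite <- exp_plus. replace (- m * yv / 2 + m / 2 * yv) with 0 by field.
  apply exp_0. }
pose proof (exp_pos (- m * yv / 2)). pose proof (exp_pos (m / 2 * yv)).
split; intros Hle.
- apply (Rmult_le_reg_l (exp (- m * yv / 2))); lra.
- rewrite <- Hinv. apply Rmult_le_compat_l; lra.
Qed.

Lemma signed_le_of_abs_le (sg xv e : R) :
  Rabs sg <= 1 -> Rabs xv <= e -> sg * xv - e <= 0.
Proof.
intros Hsg Hxv. pose proof (Rle_abs (sg * xv)). rewrite Rabs_mult in *.
pose proof (Rabs_pos xv). nra.
Qed.

Section GeodesicCoordinate.

Variables (m a b sg : R) (y y1 y2 xi x1 x2 : R -> R).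

Hypothesis Hy : forall t, a <= t <= b -> is_derive y t (y1 t).
Hypothesis Hy1 : forall t, a <= t <= b -> is_derive y1 t (y2 t).
Hypothesis Hxi : forall t, a <= t <= b -> is_derive xi t (x1 t).
Hypothesis Hx1 : forall t, a <= t <= b -> is_derive x1 t (x2 t).
Hypothesis Hx2 : forall t, a <= t <= b -> x2 t = 2 * m * y1 t * x1 t.

Let h t := sg * xi t - exp (m / 2 * y t).
Let dh t := sg * x1 t - m / 2 * y1 t * exp (m / 2 * y t).
Let w t := exp (-2 * m * y t).

Lemma is_derive_barrier t : a <= t <= b -> is_derive h t (dh t).
Proof.
intros Ht. unfold h, dh.
apply is_derive_minus_R; [apply is_derive_scal, Hxi, Ht |].
apply is_derive_exp_scal, Hy, Ht.
Qed.

Lemma is_derive_weighted_barrier t : a <= t <= b ->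
  is_derive (fun u => dh u * w u) t
    (w t * exp (m / 2 * y t) * (3 / 4 * m ^ 2 * y1 t ^ 2 - m / 2 * y2 t)).
Proof.
intros Ht.
pose proof (is_derive_mult_R _ _ _ _ t
  (is_derive_minus_R _ _ _ _ t (is_derive_scal _ _ sg _ (Hx1 t Ht))
     (is_derive_mult_R _ _ _ _ t (is_derive_scal _ _ (m / 2) _ (Hy1 t Ht))
        (is_derive_exp_scal (m / 2) y _ t (Hy t Ht))))
  (is_derive_exp_scal (-2 * m) y _ t (Hy t Ht))) as D.
unfold dh, w.
refine (eq_ind _ (fun l => is_derive _ t l) D _ _); simpl.
rewrite (Hx2 t Ht). field.
Qed.

Lemma barrier_le_endpoints :
  0 <= m -> (forall t, a <= t <= b -> y2 t <= 0) ->
  h a <= 0 -> h b <= 0 -> forall t, a <= t <= b -> h t <= 0.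
Proof.
intros Hm Hconcave.
apply (bound_of_weighted_derive_nondecr a b 0 h dh w is_derive_barrier).
- intros; apply exp_pos.
- apply (is_derive_nonneg_incr _ _ a b is_derive_weighted_barrier).
  intros t Ht. apply Rmult_le_pos.
  + apply Rmult_le_pos; left; apply exp_pos.
  + pose proof (Hconcave t Ht). assert (0 <= (m * y1 t) ^ 2) by apply pow2_ge_0.
    nra.
Qed.

End GeodesicCoordinate.

Theorem mainTheorem10 (d : nat) (lam : nat -> R)
  (hd : (1 <= d)%nat)
  (hpos : forall i : nat, (i < d)%nat -> 0 < lam i)
  (hmono : forall i j : nat, (i <= j)%nat -> (j < d)%nat -> lam i <= lam j) :
  geodesically_convex d lam (inV d lam).
Proof.
intros a b y x _ [y1 [y2 [x1 [x2 Hgeo]]]] HA HB t Ht i Hi.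
assert (Hconcave : forall s, a <= s <= b -> y2 s <= 0).
{ intros s Hs. destruct (Hgeo s Hs) as [_ [_ [_ ->]]].
  enough (0 <= sumR d (fun j => lam j * exp (-2 * lam j * y s) * x1 j s ^ 2)) by lra.
  apply sumR_nonneg. intros j Hj.
  pose proof (hpos j Hj). pose proof (exp_pos (-2 * lam j * y s)).
  pose proof (pow2_ge_0 (x1 j s)). apply Rmult_le_pos; [apply Rmult_le_pos|]; lra. }
assert (Hsigned : forall sg, Rabs sg <= 1 -> forall s, a <= s <= b ->
          sg * x i s - exp (lam i / 2 * y s) <= 0).
{ intros sg Hsg.
  apply (barrier_le_endpoints (lam i) a b sg y y1 y2 (x i) (x1 i) (x2 i));
    try (intros s Hs; destruct (Hgeo s Hs) as [? [? [Hx ?]]];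
         destruct (Hx i Hi) as [? [? ?]]; assumption).
  - left; apply hpos, Hi.
  - exact Hconcave.
  - apply signed_le_of_abs_le, exp_abs_le1_iff, HA, Hi; exact Hsg.
  - apply signed_le_of_abs_le, exp_abs_le1_iff, HB, Hi; exact Hsg. }
apply exp_abs_le1_iff, Rabs_le.
pose proof (Hsigned 1 (Rabs_le 1 1 ltac:(lra)) t Ht).
pose proof (Hsigned (-1) (Rabs_le (-1) 1 ltac:(lra)) t Ht).
lra.
Qed.
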